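(* If $\tau$ is a legal tree-like abstract path or a good tree-like abstract path, then $w(\tau)=1+G(\tau)+B_s(\tau)$.
   Context: $\mathbb F=\{0,1\}$, $\mathbb N=\{0,1,2,\dots\}$. Abstract vertex types: $o$ (interior), $u$ (unstable), $s$ (stable). An abstract edge is $\varepsilon=(\mu,(o_1,u_1,s_1),(o_2,u_2,s_2))\in\mathbb F\times\mathbb N^3\times\mathbb N^3$ with: if $\mu=0$ then $s_1=u_2=0$; if $\mu=1$ then $o_1=o_2=0$ (interior if $\mu=0$, boundary if $\mu=1$). Weight: $w(\varepsilon)=1$ if $\mu=0$, $2-s_1-u_2$ if $\mu=1$. An abstract path $\tau=(T,\tau,\sigma)$: a non-empty finite directed tree $T=(V,E)$ (nodes; arrows, or breaks), $\tau:V\to$ abstract edges, $\sigma:E\to\{o,u,s\}$, such that for each node $v$ and type $X$, $X_1(v)\ge|\{e:t(e)=v,\sigma(e)=X\}|$ and $X_2(v)\ge|\{e:s(e)=v,\sigma(e)=X\}|$, with $X_i(v)$ the entries of $\tau(v)$. Ends: $X_1(\tau)=\sum_vX_1(v)-|\sigma^{-1}(X)|$, $X_2(\tau)=\sum_vX_2(v)-|\sigma^{-1}(X)|$. Weight $w(\tau)=\sum_vw(\tau(v))$. $\tau$ is legal if $s_1(\tau)=u_2(\tau)=0$; tree-like if $o_2(v)+u_2(v)+s_2(v)=1$ for every node $v$; good if all its ends are interior or unstable, i.e. $s_1(\tau)=s_2(\tau)=0$. A break $e$ is good if $\sigma(e)\in\{o,u\}$; $G(\tau)=|\sigma^{-1}(o)|+|\sigma^{-1}(u)|$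 is the number of good breaks. $B_s(\tau)=|\{v\in V:\mu(v)=1,\ s_2(v)=1\}|$. *)

From HB Require Import structures.
From mathcomp Require Import all_boot all_order all_algebra.
Set Implicit Arguments. Unset Strict Implicit. Unset Printing Implicit Defensive.
Import GRing.Theory Num.Theory.

(* Abstract vertex types o (interior), u (unstable), s (stable). *)
Inductive vtype := To | Tu | Ts.

Definition vtype_eqb (a b : vtype) : bool :=
  match a, b with To, To | Tu, Tu | Ts, Ts => true | _, _ => false end.
Lemma vtype_eqP : Equality.axiom vtype_eqb.
Proof. by case; case; constructor. Qed.
HB.instance Definition _ := hasDecEq.Build vtype vtype_eqP.

(* Data of an abstract edge (mu,(o1,u1,s1),(o2,u2,s2)); mu = true means mu = 1. *)
Record aedge := AEdge {
  mu : bool;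
  o1 : nat; u1 : nat; s1 : nat;
  o2 : nat; u2 : nat; s2 : nat }.

Definition aedge_valid (x : aedge) : Prop :=
  (mu x = false -> s1 x = 0%N /\ u2 x = 0%N) /\
  (mu x = true -> o1 x = 0%N /\ o2 x = 0%N).

Definition aedge_weight (x : aedge) : int :=
  (if mu x then 2%:Z - (s1 x)%:Z - (u2 x)%:Z else 1)%R.

Definition end1 (X : vtype) (x : aedge) : nat :=
  match X with To => o1 x | Tu => u1 x | Ts => s1 x end.
Definition end2 (X : vtype) (x : aedge) : nat :=
  match X with To => o2 x | Tu => u2 x | Ts => s2 x end.

Section AbstractPath.
Variables (V E : finType) (src tgt : E -> V) (tau : V -> aedge) (sigma : E -> vtype).

Definition adj : rel V :=
  fun x y => [exists e, ((src e == x) && (tgt e == y)) || ((src e == y) && (tgt e == x))].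

Definition is_directed_tree : Prop :=
  (0 < #|V|)%N /\ (forall x y : V, connect adj x y) /\ (#|E|.+1 = #|V|)%N.

Definition is_abstract_path : Prop :=
  is_directed_tree /\
  (forall v, aedge_valid (tau v)) /\
  (forall v X, #|[pred e | (tgt e == v) && (sigma e == X)]| <= end1 X (tau v))%N /\
  (forall v X, #|[pred e | (src e == v) && (sigma e == X)]| <= end2 X (tau v))%N.

Definition nbreaks (X : vtype) : nat := #|[pred e | sigma e == X]|.

Definition pend1 (X : vtype) : int := ((\sum_v end1 X (tau v))%N%:Z - (nbreaks X)%:Z)%R.
Definition pend2 (X : vtype) : int := ((\sum_v end2 X (tau v))%N%:Z - (nbreaks X)%:Z)%R.

Definition path_weight : int := (\sum_v aedge_weight (tau v))%R.

Definition is_legal : Prop := pend1 Ts = 0 /\ pend2 Tu = 0.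
Definition is_good : Prop := pend1 Ts = 0 /\ pend2 Ts = 0.
Definition is_tree_like : Prop := forall v, (o2 (tau v) + u2 (tau v) + s2 (tau v) = 1)%N.

Definition good_breaks : nat := (nbreaks To + nbreaks Tu)%N.

Definition Bs : nat := #|[pred v | mu (tau v) && (s2 (tau v) == 1%N)]|.

End AbstractPath.

From HB Require Import structures.
From mathcomp Require Import all_boot all_order all_algebra.
From mathcomp Require Import zify.
Set Implicit Arguments. Unset Strict Implicit. Unset Printing Implicit Defensive.
Import GRing.Theory Num.Theory.
Local Open Scope ring_scope.

(* Tree-likeness forces exactly one outgoing end per node, so the weight of
   each node is [1 - s1], plus a correction [1] for boundary nodes whose
   outgoing end is stable.  Summing over the nodes gives
   [w = |V| + B_s - sum s1]; in a legal or good path the incoming stable ends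
   are all used up by breaks, and [|V| = |E| + 1] counts the breaks of each
   type once, leaving [1 + G + B_s]. *)

Lemma aedge_weight_tree_like (x : aedge) :
  aedge_valid x -> (o2 x + u2 x + s2 x = 1)%N ->
  aedge_weight x = 1 + (mu x && (s2 x == 1%N) : nat)%:Z - (s1 x)%:Z.
Proof.
rewrite /aedge_weight /aedge_valid.
case: x => [[] a b c d e f] /= [interior boundary] one_out.
- have [_ d0] := boundary erefl.
  by case: f one_out => [|[|f]] /=; lia.
- by have [c0 e0] := interior erefl; lia.
Qed.

Lemma card_predE (T : finType) (P : pred T) :
  #|[pred x | P x]| = (\sum_(x : T) (P x : nat))%N.
Proof.
by rewrite -sum1_card big_mkcond; apply: eq_bigr => x _; rewrite inE; case: (P x).
Qed.

Lemma int_sum_nat (I : finType) (F : I -> nat) :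
  \sum_i (F i)%:Z = (\sum_i F i)%N%:Z.
Proof. by rewrite (big_morph Posz PoszD (erefl 0%:Z)). Qed.

Section AbstractPath.
Variables (V E : finType) (tau : V -> aedge) (sigma : E -> vtype).

Lemma nbreaks_partition :
  (nbreaks sigma To + nbreaks sigma Tu + nbreaks sigma Ts)%N = #|E|.
Proof.
rewrite /nbreaks !card_predE -!big_split.
by apply: eq_bigr => e _ /=; case: (sigma e).
Qed.

Lemma pend1_eq0 (X : vtype) :
  pend1 tau sigma X = 0 -> (\sum_v end1 X (tau v))%N = nbreaks sigma X.
Proof. by move/eqP; rewrite subr_eq0 => /eqP []. Qed.

Lemma path_weight_tree_like :
  (forall v, aedge_valid (tau v)) -> is_tree_like tau ->
  path_weight tau = #|V|%:Z + (Bs tau)%:Z - (\sum_v s1 (tau v))%N%:Z.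
Proof.
move=> valid tree_like; rewrite /path_weight.
rewrite (eq_bigr _ (fun v _ => aedge_weight_tree_like (valid v) (tree_like v))).
by rewrite !big_split sumrN /= sumr_const !int_sum_nat /Bs card_predE natz.
Qed.

End AbstractPath.

Theorem corollary3p15 (V E : finType) (src tgt : E -> V)
    (tau : V -> aedge) (sigma : E -> vtype) :
  is_abstract_path src tgt tau sigma ->
  is_tree_like tau ->
  (is_legal tau sigma \/ is_good tau sigma) ->
  path_weight tau = 1 + (good_breaks sigma)%:Z + (Bs tau)%:Z.
Proof.
move=> [[_ [_ card_V]] [valid _]] tree_like legal_or_good.
have stable_in : pend1 tau sigma Ts = 0 by case: legal_or_good => -[].
rewrite path_weight_tree_like // (pend1_eq0 stable_in).
rewrite -card_V -(nbreaks_partition sigma) /good_breaks; lia.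
Qed.
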